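(* For any compact interval $\mathcal I\subset\mathbb R$ and any continuous piecewise linear function $f^*:\mathcal I\rightarrow\mathbb{R}$ with $P$ linear pieces ($P\in\mathbb N$), there exists a $\textsc{ReLU}$ network $f$ of width $2$ such that $f(x)=f^*(x)$ for all $x\in\mathcal I$.
   Context: A $\textsc{ReLU}$ network $f:\mathbb R\to\mathbb R$ is $t_L\circ\sigma_{L-1}\circ\cdots\circ\sigma_1\circ t_1$ with affine $t_\ell:\mathbb R^{d_{\ell-1}}\to\mathbb R^{d_\ell}$ ($d_0=d_L=1$) and coordinatewise $\textsc{ReLU}$ $\sigma_\ell$; its width is $\max\{d_1,\dots,d_{L-1}\}$. *)

From mathcomp Require Import all_boot all_order all_algebra.
From mathcomp Require Import all_classical all_reals all_analysis.
Set Implicit Arguments. Unset Strict Implicit. Unset Printing Implicit Defensive.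
Import Order.TTheory GRing.Theory Num.Theory numFieldNormedType.Exports.
Local Open Scope ring_scope.
Local Open Scope classical_set_scope.

Section ReLUNet.
Variable R : realType.

(* An affine layer t : R^din -> R^dout, x |-> W x + b.  Vectors are encoded
   as functions nat -> R; only coordinates i < dim are meaningful. *)
Record layer := Layer {
  ldin : nat;
  ldout : nat;
  lW : nat -> nat -> R;
  lb : nat -> R }.

Definition affine (l : layer) (x : nat -> R) : nat -> R :=
  fun i => \sum_(j < ldin l) lW l i j * x j + lb l i.

Definition relu (t : R) : R := Num.max t 0.
Definition relu_vec (x : nat -> R) : nat -> R := fun i => relu (x i).

(* A ReLU network R -> R is a nonempty list of affine layers t_1, ..., t_L
   (given as t1 and ts = [t_2; ...; t_L]) with d_0 = d_L = 1 and matching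
   consecutive dimensions. *)
Fixpoint chain_ok (d : nat) (ts : seq layer) : bool :=
  match ts with
  | [::] => d == 1%N
  | t :: ts' => (ldin t == d) && chain_ok (ldout t) ts'
  end.

Definition wf_net (t1 : layer) (ts : seq layer) : bool :=
  (ldin t1 == 1%N) && chain_ok (ldout t1) ts.

Definition eval_net (t1 : layer) (ts : seq layer) (x : R) : R :=
  (foldl (fun v t => affine t (relu_vec v)) (affine t1 (fun _ => x)) ts) 0%N.

Definition net_width (t1 : layer) (ts : seq layer) : nat :=
  \max_(d <- belast (ldout t1) (map ldout ts)) d.

Definition cpwl_pieces (a b : R) (P : nat) (f : R -> R) : Prop :=
  {within `[a, b], continuous f} /\
  exists xs : nat -> R,
    [/\ xs 0%N = a, xs P = b,
        (forall k, (k < P)%N -> xs k < xs k.+1) &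
        (forall k, (k < P)%N -> exists c d : R,
           forall x, xs k <= x <= xs k.+1 -> f x = c * x + d)].

End ReLUNet.

(* On [x_0, x_P] the function f* equals
   f*(x_0) + sum_k s_k (relu (x - x_k) - relu (x - x_(k+1))), where s_k is its
   slope on the k-th piece.  A width-2 network accumulates this sum one piece
   at a time: neuron 0 carries the partial sum plus the constant
   C = (sum_k |s_k|) (b - a), which keeps it nonnegative so that the ReLUs act
   on it as the identity, and neuron 1 carries relu (x - x_k).  Two layers per
   piece add s_k relu (x - x_k) and subtract s_k relu (x - x_(k+1)), while
   neuron 1 moves on to the next breakpoint through
   relu (relu (x - x_k) - (x_(k+1) - x_k)) = relu (x - x_(k+1)). *)

From mathcomp Require Import all_boot all_order all_algebra.
From mathcomp Require Import all_classical all_reals all_analysis.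
From mathcomp Require Import ring lra.
Import Order.TTheory GRing.Theory Num.Theory.
Set Implicit Arguments. Unset Strict Implicit. Unset Printing Implicit Defensive.
Local Open Scope ring_scope.

Section HingeNetwork.
Variable R : realType.

Lemma relu_ge0 (t : R) : 0 <= relu t.
Proof. by rewrite /relu le_max lexx orbT. Qed.

Lemma relu_le (t t' : R) : t <= t' -> relu t <= relu t'.
Proof. by move=> tt'; apply: le_max2. Qed.

Lemma ger0_relu (t : R) : 0 <= t -> relu t = t.
Proof. by move=> t_ge0; apply/max_idPl. Qed.

Lemma ler0_relu (t : R) : t <= 0 -> relu t = 0.
Proof. by move=> t_le0; apply/max_idPr. Qed.

Lemma relu_hinge_shift (t c c' : R) : c <= c' ->
  relu (relu (t - c) - (c' - c)) = relu (t - c').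
Proof.
move=> cc'; case: (lerP 0 (t - c)) => [h | h].
  by rewrite (ger0_relu h); congr relu; ring.
rewrite (ler0_relu (ltW h)) sub0r !ler0_relu //; lra.
Qed.

Definition slope (f : R -> R) (p q : R) : R := (f q - f p) / (q - p).

Lemma min_subr_relu (x c : R) : Order.min x c = x - relu (x - c).
Proof.
case: (lerP x c) => xc; first by rewrite ler0_relu ?subr0 // subr_le0.
by rewrite ger0_relu ?subr_ge0 ?(ltW xc) // opprB addrC subrK.
Qed.

Lemma affine_on_min_increment (f : R -> R) (p q c d x : R) : p < q ->
    (forall z, p <= z <= q -> f z = c * z + d) ->
  f (Order.min x q) - f (Order.min x p) = slope f p q * (Order.min x q - Order.min x p).
Proof.
move=> pq f_aff; case: (lerP x p) => xp.
  by rewrite !min_l ?(le_trans xp (ltW pq)) // !subrr mulr0.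
have xq_in : p <= Order.min x q <= q by rewrite ge_min lexx orbT le_min (ltW xp) ltW.
rewrite /slope !f_aff ?lexx ?(ltW pq) //; field; lra.
Qed.

Definition weights2 (w00 w01 w10 w11 : R) : nat -> nat -> R :=
  fun i j => if i == 0%N then (if j == 0%N then w00 else w01)
             else (if j == 0%N then w10 else w11).

Definition bias2 (b0 b1 : R) : nat -> R := fun i => if i == 0%N then b0 else b1.

Definition layer2 (din dout : nat) (w00 w01 w10 w11 b0 b1 : R) : layer R :=
  Layer din dout (weights2 w00 w01 w10 w11) (bias2 b0 b1).

Lemma affine_layer2_0 dout w00 w01 w10 w11 b0 b1 (u : nat -> R) :
  affine (layer2 2 dout w00 w01 w10 w11 b0 b1) u 0%N = w00 * u 0%N + w01 * u 1%N + b0.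
Proof. by rewrite /affine /= !big_ord_recl big_ord0 addr0. Qed.

Lemma affine_layer2_1 dout w00 w01 w10 w11 b0 b1 (u : nat -> R) :
  affine (layer2 2 dout w00 w01 w10 w11 b0 b1) u 1%N = w10 * u 0%N + w11 * u 1%N + b1.
Proof. by rewrite /affine /= !big_ord_recl big_ord0 addr0. Qed.

Definition forward (v : nat -> R) (ts : seq (layer R)) : nat -> R :=
  foldl (fun v t => affine t (relu_vec v)) v ts.

Section Hinges.
Variables (P : nat) (xs s : nat -> R).
Hypothesis xs_nondecr : forall k, (k < P)%N -> xs k <= xs k.+1.

Definition ramp (k : nat) (x : R) : R := relu (x - xs k) - relu (x - xs k.+1).
Definition hinge_sum (k : nat) (x : R) : R := \sum_(0 <= j < k) s j * ramp j x.
Definition slope_bound : R := \sum_(j < P) `|s j|.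

Lemma ramp_ge0 k x : (k < P)%N -> 0 <= ramp k x.
Proof.
move=> kP; rewrite subr_ge0; apply: relu_le.
by rewrite lerB // xs_nondecr.
Qed.

Lemma abs_slope_le_bound k : (k < P)%N -> `|s k| <= slope_bound.
Proof. by move=> kP; rewrite /slope_bound (bigD1 (Ordinal kP)) //= lerDl sumr_ge0. Qed.

Lemma slope_bound_ge0 : 0 <= slope_bound.
Proof. exact: sumr_ge0. Qed.

Lemma abs_hinge_sum_le k x : (k <= P)%N ->
  `|hinge_sum k x| <= slope_bound * (relu (x - xs 0) - relu (x - xs k)).
Proof.
elim: k => [|k IH] kP; first by rewrite /hinge_sum big_geq // subrr mulr0 normr_le0.
rewrite /hinge_sum big_nat_recr //= -/(hinge_sum k x).
have -> : relu (x - xs 0) - relu (x - xs k.+1) =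
          relu (x - xs 0) - relu (x - xs k) + ramp k x by rewrite /ramp; ring.
rewrite [slope_bound * _]mulrDr; apply: (le_trans (ler_normD _ _)).
apply: lerD; first exact: IH (ltnW kP).
rewrite normrM (ger0_norm (ramp_ge0 _ kP)) ler_wpM2r ?ramp_ge0 //.
exact: abs_slope_le_bound.
Qed.

Lemma abs_hinge_sum_le_relu k x : (k <= P)%N ->
  `|hinge_sum k x| <= slope_bound * relu (x - xs 0).
Proof.
move=> kP; apply: le_trans (abs_hinge_sum_le x kP) _.
by rewrite ler_wpM2l ?slope_bound_ge0 // lerBlDr lerDl relu_ge0.
Qed.

Lemma abs_hinge_sum_addr_le_relu k x : (k < P)%N ->
  `|hinge_sum k x + s k * relu (x - xs k)| <= slope_bound * relu (x - xs 0).
Proof.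
move=> kP; apply: le_trans (ler_normD _ _) _.
rewrite -[X in _ <= X](subrK (slope_bound * relu (x - xs k))) -mulrBr.
apply: lerD; first exact: abs_hinge_sum_le (ltnW kP).
by rewrite normrM (ger0_norm (relu_ge0 _)) ler_wpM2r ?relu_ge0 ?abs_slope_le_bound.
Qed.

Definition input_layer (C : R) : layer R := layer2 1 2 0 0 1 0 C (- xs 0).
Definition add_ramp_layer k : layer R := layer2 2 2 1 (s k) 0 1 0 (- (xs k.+1 - xs k)).
Definition sub_ramp_layer k : layer R := layer2 2 2 1 (- s k) 0 1 0 0.
Definition output_layer (c : R) : layer R := layer2 2 1 1 0 0 0 c 0.

Fixpoint hinge_layers k : seq (layer R) :=
  if k is k'.+1 then hinge_layers k' ++ [:: add_ramp_layer k'; sub_ramp_layer k']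
  else [::].

Lemma forward_hinge_layers C x k : slope_bound * relu (x - xs 0) <= C -> (k <= P)%N ->
  let v := forward (affine (input_layer C) (fun=> x)) (hinge_layers k) in
  relu (v 0%N) = C + hinge_sum k x /\ relu (v 1%N) = relu (x - xs k).
Proof.
move=> xC; elim: k => [|k IH] kP.
  rewrite /= /affine /= !big_ord1 /= mul0r mul1r add0r /hinge_sum big_geq // addr0.
  by rewrite ger0_relu // (le_trans _ xC) // mulr_ge0 ?slope_bound_ge0 ?relu_ge0.
have [v0 v1] := IH (ltnW kP).
rewrite /= /forward foldl_cat /= -/(forward _ _).
set v := forward _ _ in v0 v1 *.
rewrite /relu_vec !affine_layer2_0 !affine_layer2_1 v0 v1 /=.
rewrite !mul1r !mul0r !add0r !addr0 relu_hinge_shift ?xs_nondecr //.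
have hinge_sumS : hinge_sum k.+1 x = hinge_sum k x + s k * ramp k x.
  by rewrite /hinge_sum big_nat_recr.
have mid_ge0 : 0 <= C + hinge_sum k x + s k * relu (x - xs k).
  by have := abs_hinge_sum_addr_le_relu x kP; rewrite ler_norml => /andP[+ _]; lra.
have out_ge0 : 0 <= C + hinge_sum k.+1 x.
  by have := abs_hinge_sum_le_relu x kP; rewrite ler_norml => /andP[+ _]; lra.
rewrite (ger0_relu mid_ge0) (ger0_relu (relu_ge0 _)).
split=> //; rewrite -(ger0_relu out_ge0) hinge_sumS /ramp; congr relu; ring.
Qed.

Lemma eval_hinge_net C c x : slope_bound * relu (x - xs 0) <= C ->
  eval_net (input_layer C) (rcons (hinge_layers P) (output_layer c)) x =
  C + hinge_sum P x + c.
Proof.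
move=> xC; have [v0 _] := forward_hinge_layers xC (leqnn P).
by rewrite /eval_net -cats1 foldl_cat /= -/(forward _ _) affine_layer2_0 /relu_vec v0
  mul1r mul0r addr0.
Qed.

Lemma chain_ok_hinge_layers k ts : chain_ok 2 (hinge_layers k ++ ts) = chain_ok 2 ts.
Proof. by elim: k ts => //= k IH ts; rewrite -catA IH. Qed.

Lemma map_ldout_hinge_layers k : map (@ldout R) (hinge_layers k) = nseq k.*2 2%N.
Proof. by elim: k => // k IH; rewrite map_cat IH doubleS -(addn2 k.*2) nseqD. Qed.

Lemma wf_hinge_net C c : wf_net (input_layer C) (rcons (hinge_layers P) (output_layer c)).
Proof. by rewrite /wf_net -cats1 chain_ok_hinge_layers. Qed.

Lemma width_hinge_net C c :
  net_width (input_layer C) (rcons (hinge_layers P) (output_layer c)) = 2%N.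
Proof.
rewrite /net_width map_rcons belast_rcons map_ldout_hinge_layers -[_ :: _]/(nseq _.+1 _).
by rewrite big_nseq; elim: P.*2 => //= n ->.
Qed.

End Hinges.

Lemma cpwl_hinge_sum (f : R -> R) (P : nat) (xs : nat -> R) (x : R) :
    (forall k, (k < P)%N -> xs k < xs k.+1) ->
    (forall k, (k < P)%N -> exists c d : R,
       forall z, xs k <= z <= xs k.+1 -> f z = c * z + d) ->
    xs 0%N <= x <= xs P ->
  f x = f (xs 0%N) + hinge_sum xs (fun k => slope f (xs k) (xs k.+1)) P x.
Proof.
move=> xs_lt pieces /andP[x_ge x_le].
suff -> : hinge_sum xs (fun k => slope f (xs k) (xs k.+1)) P x =
          f (Order.min x (xs P)) - f (Order.min x (xs 0%N)).
  by rewrite (min_l x_le) (min_r x_ge); ring.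
rewrite /hinge_sum (telescope_sumr_eq (fun k => f (Order.min x (xs k)))) //.
move=> k /andP[_ kP]; have [c [d f_aff]] := pieces k kP.
by rewrite (affine_on_min_increment x (xs_lt k kP) f_aff) /ramp !min_subr_relu; ring.
Qed.

End HingeNetwork.

Theorem lemma10 (R : realType) (a b : R) (P : nat) (fstar : R -> R) :
  a <= b -> cpwl_pieces a b P fstar ->
  exists (t1 : layer R) (ts : seq (layer R)),
    [/\ wf_net t1 ts, net_width t1 ts = 2%N &
        forall x, a <= x <= b -> eval_net t1 ts x = fstar x].
Proof.
move=> ab [_ [xs [xs0 xsP xs_lt pieces]]].
pose s k := slope fstar (xs k) (xs k.+1).
have xs_le k : (k < P)%N -> xs k <= xs k.+1 by move/xs_lt/ltW.
pose C := slope_bound P s * (b - a).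
exists (input_layer xs C), (rcons (hinge_layers xs s P) (output_layer (fstar a - C))).
split; [exact: wf_hinge_net | exact: width_hinge_net | move=> x x_in].
have xC : slope_bound P s * relu (x - xs 0%N) <= C.
  rewrite ler_wpM2l ?slope_bound_ge0 // xs0 -[b - a]ger0_relu ?subr_ge0 //.
  by apply: relu_le; rewrite lerB //; case/andP: x_in.
rewrite (eval_hinge_net xs_le) // [RHS](cpwl_hinge_sum xs_lt pieces) ?xs0 ?xsP //.
by rewrite addrC addrA subrK addrC.
Qed.
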